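(* Let $\phi:\mathscr{O}\to\mathscr{P}$ be a morphism of operads in $\mathbbm{k}$-vector spaces and $\mu\in\mathscr{O}(2)$ such that both $\mu$ and $\phi\mu\in\mathscr{P}(2)$ satisfy the right Leibniz condition. Then for $G\in\mathcal{F}_{\mathscr{P}}$ the following are equivalent: (1) $G\in\mathcal{F}^{\phi\mu}_{\mathscr{P}}$; (2) $\phi^*G\in\mathcal{F}^\mu_{\mathscr{O}}$. In particular, $\phi^*:\mathcal{F}_{\mathscr{P}}\to\mathcal{F}_{\mathscr{O}}$ restricts to a functor $\phi^*:\mathcal{F}^{\phi\mu}_{\mathscr{P}}\to\mathcal{F}^\mu_{\mathscr{O}}$.
   Context: For an operad $\mathscr{Q}$, $\mathbf{Cat}\,\mathscr{Q}$ is the $\mathbbm{k}$-linear PROP (objects $\mathbb{N}$, $\mathbf{Cat}\,\mathscr{Q}(m,n)=\bigoplus_{f:\{1..m\}\to\{1..n\}}\bigotimes_i\mathscr{Q}(|f^{-1}(i)|)$, $\boxplus$ = addition on objects), and $\mathcal{F}_{\mathscr{Q}}$ is the category of $\mathbbm{k}$-linear functors $\mathbf{Cat}\,\mathscr{Q}\to\mathbbm{k}$-vector spaces. $\phi^*:\mathcal{F}_{\mathscr{P}}\to\mathcal{F}_{\mathscr{O}}$ is restriction along $\mathbf{Cat}\,\phi$. $\delta F(n)=F(n+1)$, $\xi$ acting by $F(\xi\boxplus\mathrm{Id}_1)$. For $\mu\in\mathscr{Q}(2)$, $1\le i\le n$, $\mu_i(n)\in\mathbf{Cat}\,\mathscr{Q}(n+1,n)$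 is given by the map $j\mapsto j$ ($j\le n$), $n+1\mapsto i$, identity on singleton fibres and $\mu$ with inputs $(i,n+1)$ over $i$; $\widetilde\mu_F(n)=F(\sum_i\mu_i(n)):\delta F(n)\to F(n)$. Right Leibniz condition: $\mu\circ(\nu\boxplus\mathrm{Id}_1)=\nu\circ\sum_i\mu_i(n)$ in $\mathscr{Q}(n+1)$ for all $n,\nu\in\mathscr{Q}(n)$; it makes $\widetilde\mu_F:\delta F\to F$ natural. $\mathcal{F}^\mu_{\mathscr{Q}}$ is the full subcategory of $F$ with $\widetilde\mu_F=0$. *)

From HB Require Import structures.
From mathcomp Require Import all_boot all_order all_algebra all_fingroup.
Set Implicit Arguments. Unset Strict Implicit. Unset Printing Implicit Defensive.
Import GRing.Theory.
Local Open Scope ring_scope.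

Section OperadDefs.
Variable R : fieldType.

(* Raw data of an operad in R-vector spaces: components Q(n), the action of
   the symmetric group S_n on Q(n) (oact s moves input j to position s j)
   the full composition gamma (inputs of the result are the concatenation, in
   order, of the inputs of the q_j), and the unit in Q(1). *)
Record opdata := OpData {
  ops :> nat -> lmodType R;
  oact : forall n, 'S_n -> ops n -> ops n;
  ocomp : forall r (a : 'I_r -> nat),
      ops r -> (forall j : 'I_r, ops (a j)) -> ops (\sum_(j < r) a j);
  ounit : ops 1
}.

Variable Q : opdata.

(* transport along an equality of arities (the arities are always equal where
   this is used; 0 otherwise) *)
Definition castQ (N M : nat) (x : Q N) : Q M :=
  match eqVneq N M with
  | EqNotNeq e => eq_rect N (fun k => Q k) x M e
  | NeqNotEq _ => 0
  end.
Arguments castQ : clear implicits.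

(* relabelling inputs along a bijection s of 'I_N (0 if s is not bijective) *)
Definition relabel (N : nat) (s : 'I_N -> 'I_N) (x : Q N) : Q N :=
  if [pick p : 'S_N | [forall j, p j == s j]] is Some p then oact p x else 0.

Definition fib m n (f : 'I_m -> 'I_n) (i : 'I_n) : pred 'I_m := fun x => f x == i.
Definition ar m n (f : 'I_m -> 'I_n) (i : 'I_n) : nat := #|fib f i|.

(* A generator (f, (q_i)_i) of Cat Q(m,n) is a map f : 'I_m -> 'I_n together
   with a decoration q : forall i, Q(|f^-1(i)|); Cat Q(m,n) is the direct sum
   over f of the tensor products of the Q(|f^-1 i|). *)
Definition deco m n (f : 'I_m -> 'I_n) := forall i : 'I_n, Q (ar f i).

(* position (in (g o f)^-1 k) of the t-th element of the concatenation of the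
   fibres f^-1(i), i running increasingly through g^-1(k) *)
Definition concat_pos m n l (f : 'I_m -> 'I_n) (g : 'I_n -> 'I_l) (k : 'I_l)
  (t : 'I_(ar (g \o f) k)) : 'I_(ar (g \o f) k) :=
  let xs := [seq val x | x <- flatten [seq enum (fib f i) | i <- enum (fib g k)]] in
  insubd t (index (nth 0%N xs t) [seq val x | x <- enum (fib (g \o f) k)]).

Definition catcomp m n l (f : 'I_m -> 'I_n) (q : deco f)
  (g : 'I_n -> 'I_l) (p : deco g) : deco (g \o f) :=
  fun k =>
    relabel (@concat_pos m n l f g k)
      (castQ _ (ar (g \o f) k)
         (@ocomp Q (ar g k) (fun j => ar f (@enum_val _ (fib g k) j))
             (p k) (fun j => q (@enum_val _ (fib g k) j)))).

Definition iddeco n : deco (fun x : 'I_n => x) := fun i => castQ 1 _ (ounit Q).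

End OperadDefs.

Arguments castQ {R} Q N M x.
Arguments iddeco {R} Q n.

Section OperadProps.
Variable R : fieldType.

(* Operad axioms: linearity/multilinearity, S_n acts, and associativity,
   unitality and equivariance, packaged as "Cat Q is a category". *)
Definition is_operad (Q : opdata R) : Prop :=
  (forall n (s : 'S_n) (c : R) (x y : Q n),
         oact s (c *: x + y) = c *: oact s x + oact s y)
   /\ (forall n (x : Q n), oact 1%g x = x)
   /\ (forall n (s t : 'S_n) (x : Q n), oact (s * t)%g x = oact t (oact s x))
   /\ (forall r (a : 'I_r -> nat) (c : R) (x y : Q r) (q : forall j, Q (a j)),
         ocomp (c *: x + y) q = c *: ocomp x q + ocomp y q)
   /\ (forall r (a : 'I_r -> nat) (x : Q r) (q : forall j, Q (a j)) (j : 'I_r)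
              (c : R) (u v : Q (a j)),
         ocomp x (dfwith q (c *: u + v))
         = c *: ocomp x (dfwith q u) + ocomp x (dfwith q v))
   /\ (forall m n (f : 'I_m -> 'I_n) (q : deco Q f),
         catcomp (iddeco Q m) q = q /\ catcomp q (iddeco Q n) = q)
   /\ (forall m n l o (f : 'I_m -> 'I_n) (q : deco Q f) (g : 'I_n -> 'I_l)
              (p : deco Q g) (h : 'I_l -> 'I_o) (s : deco Q h),
         catcomp (catcomp q p) s = catcomp q (catcomp p s)).

Definition is_operad_morphism (O P : opdata R) (phi : forall n, O n -> P n) : Prop :=
  [/\ (forall n (c : R) (x y : O n), phi n (c *: x + y) = c *: phi n x + phi n y),
      (forall n (s : 'S_n) (x : O n), phi n (oact s x) = oact s (phi n x)),
      phi 1 (ounit O) = ounit P &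
      (forall r (a : 'I_r -> nat) (x : O r) (q : forall j, O (a j)),
         phi _ (ocomp x q) = ocomp (phi r x) (fun j => phi (a j) (q j)))].

Definition to1 n : 'I_n -> 'I_1 := fun _ => ord0.
Definition nu_mor (Q : opdata R) n (nu : Q n) : deco Q (@to1 n) :=
  fun k => castQ Q n _ nu.
Definition plus1_map n : 'I_n.+1 -> 'I_2 :=
  fun j => if (j < n)%N then ord0 else ord_max.
Definition nu_plus_id (Q : opdata R) n (nu : Q n) : deco Q (@plus1_map n) :=
  fun k => if k == ord0 then castQ Q n _ nu else castQ Q 1 _ (ounit Q).
(* mu_i(n) : n+1 -> n, j |-> j (j < n), n |-> i  (0-indexed) *)
Definition mu_map n (i : 'I_n) : 'I_n.+1 -> 'I_n :=
  fun j => if unlift ord_max j is Some j' then j' else i.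
Definition mu_i (Q : opdata R) (mu : Q 2) n (i : 'I_n) : deco Q (@mu_map n i) :=
  fun k => if k == i then castQ Q 2 _ mu else castQ Q 1 _ (ounit Q).

Definition right_leibniz (Q : opdata R) (mu : Q 2) : Prop :=
  forall n (nu : Q n),
    castQ Q _ n.+1 (catcomp (nu_plus_id nu) (nu_mor mu) ord0)
    = \sum_(i < n) castQ Q _ n.+1 (catcomp (mu_i mu i) (nu_mor nu) ord0).

(* Data of a k-linear functor F : Cat Q -> k-Vect: F(n) and the (multilinear)
   action of the generators; F on a general morphism is the linear extension. *)
Record fdata (Q : opdata R) := FData {
  fobj : nat -> lmodType R;
  fmor : forall m n (f : 'I_m -> 'I_n), deco Q f -> fobj m -> fobj n
}.

Definition is_lin_functor (Q : opdata R) (F : fdata Q) : Prop :=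
  [/\ (forall m n (f : 'I_m -> 'I_n) (q : deco Q f) (c : R) (v w : fobj F m),
         fmor q (c *: v + w) = c *: fmor q v + fmor q w),
      (forall m n (f : 'I_m -> 'I_n) (q : deco Q f) (i : 'I_n) (c : R)
              (x y : Q (ar f i)) (v : fobj F m),
         fmor (dfwith q (c *: x + y)) v
         = c *: fmor (dfwith q x) v + fmor (dfwith q y) v),
      (forall n (v : fobj F n), fmor (iddeco Q n) v = v) &
      (forall m n l (f : 'I_m -> 'I_n) (q : deco Q f) (g : 'I_n -> 'I_l)
              (p : deco Q g) (v : fobj F m),
         fmor p (fmor q v) = fmor (catcomp q p) v)].

Definition tilde_mu (Q : opdata R) (mu : Q 2) (F : fdata Q) n (v : fobj F n.+1)
  : fobj F n := \sum_(i < n) fmor (mu_i mu i) v.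

Definition in_Fmu (Q : opdata R) (mu : Q 2) (F : fdata Q) : Prop :=
  forall n (v : fobj F n.+1), tilde_mu mu v = 0.

Definition pullback (O P : opdata R) (phi : forall n, O n -> P n) (G : fdata P)
  : fdata O :=
  @FData O (fobj G) (fun m n f q v => fmor (fun i => phi _ (q i)) v).

End OperadProps.

(** Cat phi sends each generator mu_i(n) of Cat O to the generator
    (phi mu)_i(n) of Cat P, so the map tilde-mu of phi^* G is literally the
    map tilde-(phi mu) of G, and one vanishes exactly when the other does.
    That phi^* G is again a linear functor is the functoriality of Cat phi:
    a morphism of operads commutes with transport, relabelling and
    composition, hence with the composition of Cat. *)
From Pilot Require Import Defs.
From HB Require Import structures.
From mathcomp Require Import all_boot all_order all_algebra all_fingroup.
From Stdlib Require Import FunctionalExtensionality.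
Import GRing.Theory.
Local Open Scope ring_scope.

Section CatMorphism.
Variable R : fieldType.
Variables O P : opdata R.
Variable phi : forall n, O n -> P n.
Hypothesis phi_morph : is_operad_morphism phi.

Definition map_deco {m n} {f : 'I_m -> 'I_n} (q : deco O f) : deco P f :=
  fun i => phi _ (q i).

Lemma phi0 n : phi n 0 = 0.
Proof.
case: phi_morph => phi_lin _ _ _.
have := phi_lin n 1 0 0; rewrite !scale1r !addr0 -{1}[phi n 0]addr0.
by move=> /addrI ->.
Qed.

Lemma phi_castQ N M (x : O N) : phi M (castQ O N M x) = castQ P N M (phi N x).
Proof.
rewrite /castQ; case: eqVneq => [e|_]; last exact: phi0.
by case: M / e.
Qed.

Lemma phi_ounit : phi 1 (ounit O) = ounit P.
Proof. by case: phi_morph. Qed.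

Lemma phi_relabel N (s : 'I_N -> 'I_N) (x : O N) :
  phi N (relabel s x) = relabel s (phi N x).
Proof.
rewrite /relabel; case: pickP => [p _|_]; last exact: phi0.
by case: phi_morph => _ ->.
Qed.

Lemma map_deco_catcomp m n l (f : 'I_m -> 'I_n) (q : deco O f)
    (g : 'I_n -> 'I_l) (p : deco O g) :
  map_deco (Defs.catcomp q p) = Defs.catcomp (map_deco q) (map_deco p).
Proof.
apply: functional_extensionality_dep => k.
rewrite /map_deco /Defs.catcomp phi_relabel phi_castQ.
by case: phi_morph => _ _ _ ->.
Qed.

Lemma map_deco_iddeco n : map_deco (iddeco O n) = iddeco P n.
Proof.
apply: functional_extensionality_dep => k.
by rewrite /map_deco /iddeco phi_castQ phi_ounit.
Qed.

Lemma map_deco_dfwith m n (f : 'I_m -> 'I_n) (q : deco O f) (i : 'I_n)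
    (x : O (ar f i)) :
  map_deco (dfwith q x) = dfwith (map_deco q) (phi _ x).
Proof.
apply: functional_extensionality_dep => j; rewrite /map_deco.
by case: (dfwithP q x j) => [|j' i_neq_j']; rewrite ?dfwith_in ?dfwith_out.
Qed.

Lemma map_deco_mu_i (mu : O 2) n (i : 'I_n) :
  map_deco (mu_i mu i) = mu_i (phi 2 mu) i.
Proof.
apply: functional_extensionality_dep => k; rewrite /map_deco /mu_i.
by case: (k == i); rewrite phi_castQ ?phi_ounit.
Qed.

Section Pullback.
Variable G : fdata P.

Lemma pullback_fmor m n (f : 'I_m -> 'I_n) (q : deco O f) (v : fobj G m) :
  @fmor R O (pullback phi G) m n f q v = fmor (map_deco q) v.
Proof. by []. Qed.

Lemma pullback_lin_functor : is_lin_functor G -> is_lin_functor (pullback phi G).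
Proof.
case=> fmor_lin fmor_multilin fmor_id fmor_comp; split.
- by move=> *; rewrite !pullback_fmor fmor_lin.
- move=> m n f q i c x y v; rewrite !pullback_fmor !map_deco_dfwith.
  by case: phi_morph => -> _ _ _; apply: fmor_multilin.
- by move=> n v; rewrite pullback_fmor map_deco_iddeco fmor_id.
- by move=> m n l f q g p v; rewrite !pullback_fmor fmor_comp map_deco_catcomp.
Qed.

Lemma tilde_mu_pullback (mu : O 2) n (v : fobj G n.+1) :
  tilde_mu mu (F := pullback phi G) v = tilde_mu (phi 2 mu) v.
Proof. by apply: eq_bigr => i _; rewrite pullback_fmor map_deco_mu_i. Qed.

Lemma in_Fmu_pullback (mu : O 2) :
  in_Fmu (phi 2 mu) G <-> in_Fmu mu (pullback phi G).
Proof. by split=> G_mu n v; move: (G_mu n v); rewrite tilde_mu_pullback. Qed.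

End Pullback.
End CatMorphism.

Theorem corollary4p3 (R : fieldType) (O P : opdata R) (phi : forall n, O n -> P n)
  (mu : O 2) :
  is_operad O -> is_operad P -> is_operad_morphism phi ->
  right_leibniz mu -> right_leibniz (phi 2 mu) ->
  forall G : fdata P, is_lin_functor G ->
    is_lin_functor (pullback phi G) /\
    (in_Fmu (phi 2 mu) G <-> in_Fmu mu (pullback phi G)).
Proof.
move=> _ _ phi_morph _ _ G G_lin; split.
- exact: pullback_lin_functor.
- exact: in_Fmu_pullback.
Qed.
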